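(* For $\nu>0$ let $Q_\nu(x)=\frac1x+\frac{I_{\nu+1}(x)}{I_\nu(x)}$ for $x>0$. Then $Q_\nu$ is strictly decreasing on $\left(0,\sqrt{2\nu+4}\right)$ for every $\nu>0$, and $Q_\nu$ is strictly decreasing on $(0,\infty)$ for every $\nu\in\left(0,\tfrac12\right]$.
   Context: $I_\nu$ denotes the modified Bessel function of the first kind of order $\nu$. *)

From Stdlib Require Import Reals Arith ClassicalEpsilon.
From Stdlib Require Import Factorial.
Open Scope R_scope.

(* The limit of a real sequence (chosen by classical description; meaningful
   when the sequence converges). *)
Definition lim_seq (u : nat -> R) : R :=
  epsilon (inhabits 0) (fun l => Un_cv u l).

Fixpoint poch_prod (s : R) (n : nat) : R :=
  match n with
  | O => s
  | S m => poch_prod s m * (s + INR (S m))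
  end.

(* Euler's Gamma function via Gauss' limit formula:
   Gamma(s) = lim_{n->oo} n! n^s / (s (s+1) ... (s+n))   (s > 0 here). *)
Definition Gamma (s : R) : R :=
  lim_seq (fun n => INR (fact n) * Rpower (INR n) s / poch_prod s n).

Definition BesselI (nu x : R) : R :=
  lim_seq (sum_f_R0 (fun k =>
     Rpower (x / 2) (2 * INR k + nu) / (INR (fact k) * Gamma (INR k + nu + 1)))).

Definition Qnu (nu x : R) : R := / x + BesselI (nu + 1) x / BesselI nu x.

(* Put t = x^2/4.  Gauss' product formula gives Gamma(k+nu+1) = Gamma(nu+1) (nu+1)_k,
   so I_nu(x) = (x/2)^nu / Gamma(nu+1) * B(t), where B(t) = sum_k t^k / (k! (nu+1)_k)
   is an entire power series, and I_{nu+1}(x) = (x/2)^(nu+1) / Gamma(nu+1) * B'(t).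
   Hence Q_nu(x) = 1/x + (x/2) B'(t) / B(t).  Using the Kummer equation
   t B'' + (nu+1) B' = B one computes Q_nu'(x) = - P(t) / (x^2 B(t)^2) with
   P = (1 - 4t) B^2 + (4nu+2) t B B' + 4 t^2 B'^2, so everything reduces to P > 0.

   The quadratic forms K = t B'^2 + (nu+1) B B' - B^2 and
   E = (4t+2nu+2) B'^2 + (4nu+2) B B' - 4 B^2 vanish at t = 0 and satisfy the
   Euler-type equations t K' + (nu+1) K = t B'^2 and t E' + (2nu+2) E = (4nu+6) K;
   a comparison principle (t^c F(t) is nondecreasing) then gives K, E >= 0.
   - If nu <= 1/2, then P' = 2(1-2nu) K >= 0 and P(0) = 1, so P > 0 everywhere.
   - If t < (nu+2)/2, i.e. x < sqrt(2nu+4), then with y = t B'/B the inequality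
     E >= 0 is a quadratic constraint on y, and an elementary polynomial argument
     shows that it forces P / B^2 = 4y^2 + (4nu+2) y + 1 - 4t > 0. *)

From Stdlib Require Import Reals Lra Psatz ClassicalEpsilon Factorial Lia.
From Coquelicot Require Import Coquelicot.
Open Scope R_scope.

Lemma lim_seq_of_cv (u : nat -> R) (l : R) : Un_cv u l -> lim_seq u = l.
Proof.
intros Hu. unfold lim_seq. apply UL_sequence with u; [|exact Hu].
apply epsilon_spec. exists l; exact Hu.
Qed.

Lemma INR_S_pos (n : nat) : 0 < INR (S n).
Proof. apply lt_0_INR; lia. Qed.

Lemma INR_fact_pos (n : nat) : 0 < INR (fact n).
Proof. apply lt_0_INR, lt_O_fact. Qed.

Lemma Rpower_pos (x s : R) : 0 < Rpower x s.
Proof. unfold Rpower. apply exp_pos. Qed.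

Lemma Rpower_1_base (s : R) : Rpower 1 s = 1.
Proof. unfold Rpower. rewrite ln_1, Rmult_0_r. apply exp_0. Qed.

Lemma ln_le_pred (x : R) : 0 < x -> ln x <= x - 1.
Proof. intros Hx. pose proof (exp_ineq1_le (ln x)) as H. rewrite exp_ln in H; lra. Qed.

Lemma ln_ge_pred_inv (x : R) : 0 < x -> 1 - / x <= ln x.
Proof.
intros Hx. pose proof (ln_le_pred (/ x) (Rinv_0_lt_compat _ Hx)) as H.
rewrite ln_Rinv in H by lra. lra.
Qed.

(* Bernoulli's inequality (1+u)^s <= 1 + s u for real exponents 0 < s <= 1:
   with a = 1 + s u, both ln((1+u)/a) and ln a are controlled by the tangent
   bounds, and the two error terms cancel exactly. *)
Lemma Rpower_bernoulli_upper (s u : R) :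
  0 < s <= 1 -> 0 <= u -> Rpower (1 + u) s <= 1 + s * u.
Proof.
intros Hs Hu. set (a := 1 + s * u).
assert (Ha : 0 < a) by (unfold a; nra).
assert (Hq : 0 < (1 + u) / a) by (apply Rdiv_lt_0_compat; lra).
assert (Hsplit : ln (1 + u) = ln ((1 + u) / a) + ln a).
{ rewrite <- ln_mult by lra. f_equal. field. lra. }
assert (Hlog : s * ln (1 + u) <= ln a).
{ pose proof (ln_le_pred _ Hq). pose proof (ln_ge_pred_inv a Ha).
  assert (Hid : s * ((1 + u) / a - 1) = (1 - s) * (1 - / a)) by (unfold a in *; field; lra).
  assert (s * ln ((1 + u) / a) <= s * ((1 + u) / a - 1)) by (apply Rmult_le_compat_l; lra).
  assert ((1 - s) * (1 - / a) <= (1 - s) * ln a) by (apply Rmult_le_compat_l; lra).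
  rewrite Hsplit. lra. }
unfold Rpower. rewrite <- (exp_ln a Ha).
destruct (Rle_lt_or_eq_dec _ _ Hlog) as [Hlt|Heq].
- left. apply exp_increasing, Hlt.
- rewrite Heq. lra.
Qed.

Lemma Rpower_bernoulli_lower (s u : R) :
  0 < s -> 0 < u -> 1 + s * (1 - / (1 + u)) <= Rpower (1 + u) s.
Proof.
intros Hs Hu. unfold Rpower. pose proof (exp_ineq1_le (s * ln (1 + u))).
pose proof (ln_ge_pred_inv (1 + u)). nra.
Qed.

(** * Gauss' limit formula for the Gamma function *)

Lemma poch_prod_pos (s : R) (n : nat) : 0 < s -> 0 < poch_prod s n.
Proof.
intros Hs; induction n as [|n IH]; cbn [poch_prod]; [lra|].
apply Rmult_lt_0_compat; [exact IH|]. pose proof (pos_INR (S n)); lra.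
Qed.

Definition gauss_seq (s : R) (n : nat) : R :=
  INR (fact n) * Rpower (INR n) s / poch_prod s n.

Definition gauss_upper (s : R) (n : nat) : R :=
  INR (fact n) * Rpower (INR n + 1) s / poch_prod s n.

Lemma gauss_seq_pos (s : R) (n : nat) : 0 < s -> 0 < gauss_seq s n.
Proof.
intros Hs. unfold gauss_seq. apply Rdiv_lt_0_compat; [|apply poch_prod_pos, Hs].
apply Rmult_lt_0_compat; [apply INR_fact_pos | apply Rpower_pos].
Qed.

Lemma gauss_seq_ratio (s : R) (n : nat) : 0 < s ->
  gauss_seq s (S (S n)) =
  gauss_seq s (S n) * (INR (S (S n)) * Rpower (1 + / INR (S n)) s / (s + INR (S (S n)))).
Proof.
intros Hs. unfold gauss_seq.
pose proof (INR_S_pos n) as H1. pose proof (INR_S_pos (S n)) as H2.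
assert (Hpow : Rpower (INR (S (S n))) s = Rpower (INR (S n)) s * Rpower (1 + / INR (S n)) s).
{ rewrite Rpower_mult_distr; [|lra|pose proof (Rinv_0_lt_compat _ H1); lra].
  f_equal. rewrite (S_INR (S n)). field. lra. }
rewrite Hpow. replace (fact (S (S n))) with (S (S n) * fact (S n))%nat by reflexivity.
rewrite mult_INR. change (poch_prod s (S (S n))) with (poch_prod s (S n) * (s + INR (S (S n)))).
pose proof (poch_prod_pos s (S n) Hs). field. lra.
Qed.

(* From index 1 on, the Gauss sequence is nondecreasing (lower Bernoulli bound). *)
Lemma gauss_seq_growing (s : R) : 0 < s -> Un_growing (fun n => gauss_seq s (S n)).
Proof.
intros Hs n. simpl. rewrite gauss_seq_ratio by exact Hs.
pose proof (gauss_seq_pos s (S n) Hs).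
pose proof (INR_S_pos n) as H1. pose proof (INR_S_pos (S n)) as H2.
pose proof (Rpower_bernoulli_lower s (/ INR (S n)) Hs (Rinv_0_lt_compat _ H1)) as Hb.
replace (1 - / (1 + / INR (S n))) with (/ INR (S (S n))) in Hb
  by (rewrite (S_INR (S n)); field; lra).
assert (1 <= INR (S (S n)) * Rpower (1 + / INR (S n)) s / (s + INR (S (S n)))).
{ apply (Rmult_le_reg_r (s + INR (S (S n)))); [lra|].
  unfold Rdiv. rewrite Rmult_assoc, Rinv_l, Rmult_1_r by lra.
  apply Rle_trans with (INR (S (S n)) * (1 + s * / INR (S (S n)))).
  - right. field. lra.
  - apply Rmult_le_compat_l; lra. }
nra.
Qed.

(* For 0 < s <= 1 the upper sequence is nonincreasing (upper Bernoulli bound). *)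
Lemma gauss_upper_decreasing (s : R) (n : nat) :
  0 < s <= 1 -> gauss_upper s (S n) <= gauss_upper s n.
Proof.
intros Hs. unfold gauss_upper.
pose proof (INR_S_pos n) as H1. pose proof (pos_INR n).
assert (Hpow : Rpower (INR (S n) + 1) s = Rpower (INR n + 1) s * Rpower (1 + / INR (S n)) s).
{ rewrite Rpower_mult_distr; [|lra|pose proof (Rinv_0_lt_compat _ H1); lra].
  f_equal. rewrite (S_INR n) in *. field. lra. }
rewrite Hpow. replace (fact (S n)) with (S n * fact n)%nat by reflexivity.
rewrite mult_INR. change (poch_prod s (S n)) with (poch_prod s n * (s + INR (S n))).
pose proof (poch_prod_pos s n (proj1 Hs)).
pose proof (Rpower_bernoulli_upper s (/ INR (S n)) Hs (Rlt_le _ _ (Rinv_0_lt_compat _ H1))).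
pose proof (Rpower_pos (1 + / INR (S n)) s).
set (A := INR (fact n) * Rpower (INR n + 1) s).
assert (HA : 0 < A) by (unfold A; pose proof (INR_fact_pos n); pose proof (Rpower_pos (INR n + 1) s); nra).
apply Rle_trans with (A / poch_prod s n * (INR (S n) * (1 + s * / INR (S n)) / (s + INR (S n)))).
- apply Rle_trans with
    (A / poch_prod s n * (INR (S n) * Rpower (1 + / INR (S n)) s / (s + INR (S n)))).
  + right. unfold A. field. lra.
  + apply Rmult_le_compat_l; [apply Rlt_le, Rdiv_lt_0_compat; lra|].
    unfold Rdiv. apply Rmult_le_compat_r; [apply Rlt_le, Rinv_0_lt_compat; lra|].
    apply Rmult_le_compat_l; lra.
- right. field. lra.
Qed.

Lemma gauss_upper_bound (s : R) (n : nat) : 0 < s <= 1 -> gauss_upper s n <= / s.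
Proof.
intros Hs. induction n as [|n IH].
- unfold gauss_upper. simpl. rewrite Rplus_0_l, Rpower_1_base. right. field. lra.
- apply Rle_trans with (gauss_upper s n); [apply gauss_upper_decreasing, Hs | exact IH].
Qed.

Lemma gauss_seq_le_upper (s : R) (n : nat) : 0 < s -> gauss_seq s (S n) <= gauss_upper s (S n).
Proof.
intros Hs. unfold gauss_seq, gauss_upper.
pose proof (INR_S_pos n). pose proof (poch_prod_pos s (S n) Hs).
unfold Rdiv. apply Rmult_le_compat_r; [left; apply Rinv_0_lt_compat; lra|].
apply Rmult_le_compat_l; [apply pos_INR|]. apply Rle_Rpower_l; lra.
Qed.

(* For 0 < s <= 1 the Gauss sequence converges: monotone and bounded by 1/s. *)
Lemma gauss_cv_unit (s : R) : 0 < s <= 1 -> exists L, 0 < L /\ Un_cv (gauss_seq s) L.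
Proof.
intros Hs. pose proof (gauss_seq_growing s (proj1 Hs)) as Hgrow.
destruct (growing_cv _ Hgrow) as [l Hl].
{ exists (/ s). intros x [n ->]. apply Rle_trans with (gauss_upper s (S n)).
  - apply gauss_seq_le_upper; lra.
  - apply gauss_upper_bound, Hs. }
exists l. split.
- apply Rlt_le_trans with (gauss_seq s 1); [apply gauss_seq_pos; lra|].
  apply (growing_ineq _ l Hgrow Hl 0).
- apply is_lim_seq_Reals, is_lim_seq_incr_1, is_lim_seq_Reals, Hl.
Qed.

Lemma inv_shift_lim (c : R) : 0 < c -> is_lim_seq (fun n => / (c + INR n)) 0.
Proof.
intros Hc. apply (is_lim_seq_inv _ p_infty); [|discriminate].
eapply is_lim_seq_plus; [apply is_lim_seq_const | apply is_lim_seq_INR | simpl; constructor].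
Qed.

Lemma poch_prod_succ (s : R) (n : nat) :
  poch_prod (s + 1) n * s = poch_prod s n * (s + 1 + INR n).
Proof.
induction n as [|n IH]; cbn [poch_prod]; [simpl; ring|].
rewrite S_INR. transitivity (poch_prod (s + 1) n * s * (s + 1 + INR n + 1)); [ring|].
rewrite IH. ring.
Qed.

(* The functional equation at the level of Gauss sequences: since
   gauss_seq (s+1) n = gauss_seq s n * s n / (s+1+n), a limit L for s gives
   the limit s L for s+1. *)
Lemma gauss_cv_succ (s L : R) :
  0 < s -> Un_cv (gauss_seq s) L -> Un_cv (gauss_seq (s + 1)) (s * L).
Proof.
intros Hs HL. apply is_lim_seq_Reals. apply is_lim_seq_Reals in HL.
apply is_lim_seq_ext_loc with (fun n => gauss_seq s n * (s - s * (s + 1) * / ((s + 1) + INR n))).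
- exists 1%nat. intros n Hn.
  assert (0 < INR n) by (apply lt_0_INR; lia).
  unfold gauss_seq. rewrite Rpower_plus, Rpower_1 by lra.
  pose proof (poch_prod_pos s n Hs). pose proof (poch_prod_pos (s + 1) n ltac:(lra)).
  replace (poch_prod (s + 1) n) with (poch_prod s n * (s + 1 + INR n) / s)
    by (pose proof (poch_prod_succ s n); field_simplify_eq; lra).
  field. repeat split; lra.
- replace (s * L) with (L * (s - s * (s + 1) * 0)) by ring.
  apply is_lim_seq_mult'; [exact HL|].
  apply is_lim_seq_minus'; [apply is_lim_seq_const|].
  apply is_lim_seq_mult'; [apply is_lim_seq_const | apply inv_shift_lim; lra].
Qed.

Lemma gauss_cv (s : R) : 0 < s -> exists L, 0 < L /\ Un_cv (gauss_seq s) L.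
Proof.
intros Hs. destruct (INR_unbounded s) as [n Hn].
revert s Hs Hn. induction n as [|n IH]; intros s Hs Hn.
- apply gauss_cv_unit. simpl in Hn. lra.
- destruct (Rle_or_lt s 1) as [Hs1|Hs1]; [apply gauss_cv_unit; lra|].
  rewrite S_INR in Hn. destruct (IH (s - 1)) as [L [HL HcvL]]; [lra|lra|].
  exists ((s - 1) * L). split; [apply Rmult_lt_0_compat; lra|].
  replace s with (s - 1 + 1) at 1 by ring. apply gauss_cv_succ; [lra | exact HcvL].
Qed.

Lemma Gamma_spec (s : R) : 0 < s -> 0 < Gamma s /\ Un_cv (gauss_seq s) (Gamma s).
Proof.
intros Hs. destruct (gauss_cv s Hs) as [L [HL Hcv]].
unfold Gamma. fold (gauss_seq s). rewrite (lim_seq_of_cv _ _ Hcv). auto.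
Qed.

Lemma Gamma_succ (s : R) : 0 < s -> Gamma (s + 1) = s * Gamma s.
Proof.
intros Hs. apply lim_seq_of_cv, gauss_cv_succ; [exact Hs | apply Gamma_spec, Hs].
Qed.

Fixpoint rising (a : R) (k : nat) : R :=
  match k with O => 1 | S k => rising a k * (a + INR k) end.

Lemma rising_pos (a : R) (k : nat) : 0 < a -> 0 < rising a k.
Proof.
intros Ha. induction k as [|k IH]; cbn [rising]; [lra|].
apply Rmult_lt_0_compat; [exact IH | pose proof (pos_INR k); lra].
Qed.

Lemma Gamma_add_nat (a : R) (k : nat) : 0 < a -> Gamma (INR k + a) = Gamma a * rising a k.
Proof.
intros Ha. induction k as [|k IH]; cbn [rising].
- simpl. rewrite Rplus_0_l. ring.
- rewrite S_INR. replace (INR k + 1 + a) with (INR k + a + 1) by ring.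
  rewrite Gamma_succ by (pose proof (pos_INR k); lra). rewrite IH. ring.
Qed.

(** * The entire series B(t) = sum_k t^k / (k! (nu+1)_k) *)

Lemma inside_radius (a : nat -> R) (t : R) :
  CV_radius a = p_infty -> Rbar_lt (Rabs t) (CV_radius a).
Proof. intros Ha; rewrite Ha; exact I. Qed.

Lemma PSeries_ge_head (a : nat -> R) (t : R) :
  (forall n, 0 <= a n) -> 0 < t -> CV_radius a = p_infty -> a 0%nat <= PSeries a t.
Proof.
intros Ha Ht Hrad.
assert (Hex : forall t', ex_pseries a t') by (intros t'; apply CV_radius_inside, inside_radius, Hrad).
rewrite PSeries_decr_1 by apply Hex.
assert (0 <= PSeries (PS_decr_1 a) t).
{ rewrite <- (PSeries_const_0 t). unfold PSeries. apply Series_le.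
  - intros n. rewrite Rmult_0_l. split; [lra|].
    apply Rmult_le_pos; [apply Ha | apply pow_le; lra].
  - apply ex_pseries_R, ex_pseries_decr_1. right. exists (/ t). change (/ t * t = 1).
    field. lra. apply Hex. }
nra.
Qed.

Section BesselSeries.

Variable nu : R.
Hypothesis nu_pos : 0 < nu.

Fixpoint bessel_coef (k : nat) : R :=
  match k with
  | O => 1
  | S j => bessel_coef j / (INR (S j) * (nu + INR (S j)))
  end.

Definition bessel_B (t : R) : R := PSeries bessel_coef t.
Definition bessel_dB (t : R) : R := PSeries (PS_derive bessel_coef) t.
Definition bessel_d2B (t : R) : R := PSeries (PS_derive (PS_derive bessel_coef)) t.

Lemma bessel_coef_pos (k : nat) : 0 < bessel_coef k.
Proof.
induction k as [|k IH]; cbn [bessel_coef]; [lra|].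
pose proof (INR_S_pos k). apply Rdiv_lt_0_compat; [exact IH | nra].
Qed.

Lemma bessel_coef_closed_form (k : nat) :
  bessel_coef k = / (INR (fact k) * rising (nu + 1) k).
Proof.
induction k as [|k IH]; cbn [bessel_coef rising]; [simpl; field|].
replace (fact (S k)) with (S k * fact k)%nat by reflexivity. rewrite mult_INR, IH.
replace (nu + 1 + INR k) with (nu + INR (S k)) by (rewrite S_INR; ring).
pose proof (INR_S_pos k). pose proof (INR_fact_pos k). pose proof (rising_pos (nu + 1) k).
field. repeat split; lra.
Qed.

Lemma bessel_radius : CV_radius bessel_coef = p_infty.
Proof.
apply CV_radius_infinite_DAlembert.
- intros n. pose proof (bessel_coef_pos n). lra.
- apply is_lim_seq_le_le with (fun _ => 0) (fun n => / (1 + INR n)).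
  + intros n. cbn [bessel_coef].
    pose proof (bessel_coef_pos n). pose proof (INR_S_pos n). pose proof (pos_INR n).
    replace (bessel_coef n / (INR (S n) * (nu + INR (S n))) / bessel_coef n)
      with (/ (INR (S n) * (nu + INR (S n)))) by (field; lra).
    rewrite S_INR in *. rewrite Rabs_right by (left; apply Rinv_0_lt_compat; nra).
    split; [left; apply Rinv_0_lt_compat; nra|].
    apply Rinv_le_contravar; nra.
  + apply is_lim_seq_const.
  + apply inv_shift_lim; lra.
Qed.

Lemma bessel_radius_d1 : CV_radius (PS_derive bessel_coef) = p_infty.
Proof. rewrite CV_radius_derive. exact bessel_radius. Qed.

Lemma bessel_radius_d2 : CV_radius (PS_derive (PS_derive bessel_coef)) = p_infty.
Proof. rewrite !CV_radius_derive. exact bessel_radius. Qed.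

Lemma bessel_B_derive (t : R) : is_derive bessel_B t (bessel_dB t).
Proof. apply is_derive_PSeries, inside_radius, bessel_radius. Qed.

Lemma bessel_dB_derive (t : R) : is_derive bessel_dB t (bessel_d2B t).
Proof. apply is_derive_PSeries, inside_radius, bessel_radius_d1. Qed.

Lemma bessel_ode (t : R) : t * bessel_d2B t + (nu + 1) * bessel_dB t = bessel_B t.
Proof.
pose proof (CV_radius_inside _ t (inside_radius _ t bessel_radius_d1)) as Hex1.
pose proof (CV_radius_inside _ t (inside_radius _ t bessel_radius_d2)) as Hex2.
unfold bessel_d2B, bessel_dB, bessel_B.
rewrite <- PSeries_incr_1, <- PSeries_scal, <- PSeries_plus.
2: apply ex_pseries_incr_1, Hex2.
2: apply ex_pseries_scal; [apply Rmult_comm | exact Hex1].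
apply PSeries_ext. intros [|m]; unfold PS_incr_1, PS_scal, PS_plus, PS_derive, plus, scal;
  cbn -[INR]; change mult with Rmult.
- change (INR 1) with 1. field. lra.
- pose proof (INR_S_pos m). rewrite (S_INR (S m)). field. lra.
Qed.

Lemma bessel_B_0 : bessel_B 0 = 1.
Proof. unfold bessel_B. rewrite PSeries_0. reflexivity. Qed.

Lemma bessel_dB_0 : bessel_dB 0 = / (nu + 1).
Proof.
unfold bessel_dB. rewrite PSeries_0. unfold PS_derive. simpl. field. lra.
Qed.

Lemma bessel_B_ge_1 (t : R) : 0 < t -> 1 <= bessel_B t.
Proof.
intros Ht. apply (PSeries_ge_head bessel_coef t); [|exact Ht|exact bessel_radius].
intros n; left; apply bessel_coef_pos.
Qed.

Lemma bessel_dB_pos (t : R) : 0 < t -> 0 < bessel_dB t.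
Proof.
intros Ht.
assert (Hc : forall n, 0 < PS_derive bessel_coef n)
  by (intros n; apply Rmult_lt_0_compat; [apply INR_S_pos | apply bessel_coef_pos]).
apply Rlt_le_trans with (PS_derive bessel_coef 0); [apply Hc|].
apply PSeries_ge_head; [intros n; left; apply Hc | exact Ht | exact bessel_radius_d1].
Qed.

End BesselSeries.

Lemma bessel_coef_succ (nu : R) (k : nat) :
  0 < nu -> bessel_coef (nu + 1) k = (nu + 1) * PS_derive (bessel_coef nu) k.
Proof.
intros Hnu. unfold PS_derive. induction k as [|k IH]; cbn [bessel_coef].
- simpl. field. lra.
- rewrite IH. cbn [bessel_coef].
  pose proof (INR_S_pos k). pose proof (INR_S_pos (S k)). rewrite (S_INR (S k)) in *.
  field. lra.
Qed.

Lemma bessel_B_succ (nu t : R) : 0 < nu -> bessel_B (nu + 1) t = (nu + 1) * bessel_dB nu t.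
Proof.
intros Hnu. unfold bessel_B, bessel_dB. rewrite <- PSeries_scal.
apply PSeries_ext. intros n. apply bessel_coef_succ, Hnu.
Qed.

Lemma BesselI_series (nu x : R) : 0 < nu -> 0 < x ->
  BesselI nu x = Rpower (x / 2) nu / Gamma (nu + 1) * bessel_B nu (x * x / 4).
Proof.
intros Hnu Hx. pose proof (proj1 (Gamma_spec (nu + 1) ltac:(lra))) as HG.
assert (Hterm : forall k, Rpower (x / 2) (2 * INR k + nu) / (INR (fact k) * Gamma (INR k + nu + 1))
  = Rpower (x / 2) nu / Gamma (nu + 1) * (bessel_coef nu k * (x * x / 4) ^ k)).
{ intros k. rewrite Rpower_plus.
  replace (2 * INR k) with (INR (2 * k)) by (rewrite mult_INR; reflexivity).
  rewrite Rpower_pow, pow_mult by lra. replace ((x / 2) ^ 2) with (x * x / 4) by field.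
  rewrite Rplus_assoc, Gamma_add_nat by lra.
  rewrite bessel_coef_closed_form by exact Hnu.
  pose proof (INR_fact_pos k). pose proof (rising_pos (nu + 1) k ltac:(lra)).
  field. repeat split; lra. }
unfold BesselI. apply lim_seq_of_cv, is_lim_seq_Reals.
apply is_lim_seq_ext with (fun n => Rpower (x / 2) nu / Gamma (nu + 1)
  * sum_n (fun k => bessel_coef nu k * (x * x / 4) ^ k) n).
- intros n. rewrite sum_n_Reals, scal_sum. apply sum_eq. intros i _. rewrite Hterm. ring.
- apply (is_lim_seq_scal_l _ _ (bessel_B nu (x * x / 4))).
  apply is_pseries_R, PSeries_correct.
  apply CV_radius_inside, inside_radius, bessel_radius, Hnu.
Qed.

Definition Q_series (nu x : R) : R :=
  / x + (x / 2) * bessel_dB nu (x * x / 4) / bessel_B nu (x * x / 4).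

(* Via the series representation and Gamma(nu+2) = (nu+1) Gamma(nu+1). *)
Lemma Qnu_series (nu x : R) : 0 < nu -> 0 < x -> Qnu nu x = Q_series nu x.
Proof.
intros Hnu Hx. unfold Qnu, Q_series.
rewrite (BesselI_series nu x Hnu Hx), (BesselI_series (nu + 1) x ltac:(lra) Hx).
rewrite bessel_B_succ, Gamma_succ, Rpower_plus, Rpower_1 by lra.
pose proof (proj1 (Gamma_spec (nu + 1) ltac:(lra))).
pose proof (bessel_B_ge_1 nu Hnu (x * x / 4) ltac:(nra)).
pose proof (Rpower_pos (x / 2) nu).
field. repeat split; lra.
Qed.

(** * A comparison principle for Euler-type differential inequalities *)

Lemma nondecreasing_of_derive (G dG : R -> R) (a b : R) : a <= b ->
  (forall x, a <= x <= b -> is_derive G x (dG x)) ->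
  (forall x, a <= x <= b -> 0 <= dG x) -> G a <= G b.
Proof.
intros Hab HG Hd.
destruct (MVT_gen G a b dG) as [c [Hc Hmvt]]; rewrite ?Rmin_left, ?Rmax_right in * by lra.
- intros x Hx. apply HG. lra.
- intros x Hx. apply continuity_pt_filterlim, (ex_derive_continuous G).
  exists (dG x). apply HG. lra.
- assert (0 <= dG c * (b - a)) by (apply Rmult_le_pos; [apply Hd; lra | lra]). lra.
Qed.

(* If t F'(t) + c F(t) >= 0 for t > 0, then (t^c F(t))' = t^(c-1) (t F' + c F) >= 0,
   so t^c F(t) is nondecreasing on (0, oo). *)
Lemma euler_weight_nondecreasing (F dF : R -> R) (c a b : R) : 0 < a <= b ->
  (forall t, is_derive F t (dF t)) ->
  (forall t, 0 < t -> 0 <= t * dF t + c * F t) ->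
  Rpower a c * F a <= Rpower b c * F b.
Proof.
intros Hab HF Hpos.
apply (nondecreasing_of_derive (fun s => Rpower s c * F s)
  (fun s => c * Rpower s (c - 1) * F s + Rpower s c * dF s)); [lra| |].
- intros s Hs. apply (is_derive_mult (fun s => Rpower s c) F); [|apply HF|].
  + apply is_derive_Reals, derivable_pt_lim_power. lra.
  + intros; apply Rmult_comm.
- intros s Hs.
  assert (Hpow : Rpower s c = Rpower s (c - 1) * s).
  { rewrite <- (Rpower_1 s) at 3 by lra. rewrite <- Rpower_plus. f_equal. ring. }
  rewrite Hpow.
  replace (c * Rpower s (c - 1) * F s + Rpower s (c - 1) * s * dF s)
    with (Rpower s (c - 1) * (s * dF s + c * F s)) by ring.
  apply Rmult_le_pos; [left; apply Rpower_pos | apply Hpos; lra].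
Qed.

(* Comparison principle: F(0) = 0 and t F' + c F >= 0 force F >= 0 on (0, oo).
   If F(t) < 0, continuity at 0 gives a small e with e^c F(e) > t^c F(t),
   contradicting the monotonicity of t^c F(t). *)
Lemma euler_nonneg (F dF : R -> R) (c : R) : 0 < c -> F 0 = 0 ->
  (forall t, is_derive F t (dF t)) ->
  (forall t, 0 < t -> 0 <= t * dF t + c * F t) -> forall t, 0 < t -> 0 <= F t.
Proof.
intros Hc HF0 HF Hpos t Ht.
destruct (Rle_or_lt 0 (F t)) as [Hok|Hneg]; [exact Hok|exfalso].
set (Gt := Rpower t c * F t).
assert (HGt : Gt < 0) by (unfold Gt; pose proof (Rpower_pos t c); nra).
assert (Hcont : continuity_pt F 0).
{ apply continuity_pt_filterlim, (ex_derive_continuous F). exists (dF 0). apply HF. }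
destruct (Hcont (- Gt) ltac:(lra)) as [alp [Halp Hnear]].
set (e := Rmin (alp / 2) (Rmin (t / 2) 1)).
assert (He : 0 < e /\ e <= alp / 2 /\ e <= t / 2 /\ e <= 1).
{ unfold e. repeat split.
  - apply Rmin_pos; [lra | apply Rmin_pos; lra].
  - apply Rmin_l.
  - eapply Rle_trans; [apply Rmin_r | apply Rmin_l].
  - eapply Rle_trans; [apply Rmin_r | apply Rmin_r]. }
assert (HFe : Rabs (F e) < - Gt).
{ specialize (Hnear e). simpl in Hnear. unfold R_dist in Hnear.
  rewrite HF0, !Rminus_0_r in Hnear. apply Hnear.
  split; [split; [exact I | lra] | rewrite Rabs_right; lra]. }
assert (Hpe : 0 < Rpower e c <= 1).
{ split; [apply Rpower_pos|]. rewrite <- (Rpower_1_base c). apply Rle_Rpower_l; lra. }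
assert (Gt < Rpower e c * F e).
{ pose proof (Rle_abs (- F e)) as Habs. rewrite Rabs_Ropp in Habs.
  assert (Rpower e c * (- F e) <= Rpower e c * Rabs (F e)) by (apply Rmult_le_compat_l; lra).
  pose proof (Rabs_pos (F e)). nra. }
pose proof (euler_weight_nondecreasing F dF c e t ltac:(lra) HF Hpos). unfold Gt in *. lra.
Qed.

(* The cubic estimate behind the range t < (nu+2)/2: writing u = 2nu+1, w = nu+1
   and z = 2ut - w > 0, the quantity (4t+2w) z^2 + 4u^2 w t z - 16 u^2 w^2 t^2
   is negative. *)
Lemma bessel_cubic_neg (nu t : R) : 0 < nu -> 0 < t -> t < (nu + 2) / 2 ->
  0 < 2 * (2 * nu + 1) * t - (nu + 1) ->
  (4 * t + 2 * (nu + 1)) * (2 * (2 * nu + 1) * t - (nu + 1)) ^ 2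
  + 4 * (2 * nu + 1) ^ 2 * (nu + 1) * t * (2 * (2 * nu + 1) * t - (nu + 1))
  - 16 * (2 * nu + 1) ^ 2 * (nu + 1) ^ 2 * t ^ 2 < 0.
Proof.
intros Hnu Ht Htb Hz.
assert (Hgap : 0 < (nu + 2) - 2 * t) by lra.
pose proof (Rmult_lt_0_compat _ _ Hz Hgap) as H1.
pose proof (Rmult_lt_0_compat _ _ H1 Ht) as H2.
pose proof (Rmult_lt_0_compat _ _ H1 Hnu) as H3.
pose proof (Rmult_lt_0_compat _ _ H3 Hnu) as H4.
pose proof (Rmult_lt_0_compat _ _ H2 Hnu) as H5.
pose proof (Rmult_lt_0_compat _ _ H5 Hnu) as H6.
pose proof (Rmult_lt_0_compat _ _ H4 Hnu) as H7.
nra.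
Qed.

(* If y > 0 satisfies phi(y) = (4t+2nu+2) y^2 + (4nu+2) t y - 4 t^2 >= 0 and
   t < (nu+2)/2, then g(y) = 4 y^2 + (4nu+2) y + 1 - 4t > 0.  Indeed
   phi = (4t+2nu+2)/4 * g + L(y) with L affine and decreasing; if g(y) <= 0 then
   L(y) >= 0 bounds y by the root of L, where phi is negative by the cubic estimate. *)
Lemma quadratic_constraint (nu t y : R) : 0 < nu -> 0 < t -> t < (nu + 2) / 2 -> 0 < y ->
  0 <= (4 * t + 2 * nu + 2) * y ^ 2 + (4 * nu + 2) * t * y - 4 * t ^ 2 ->
  0 < 4 * y ^ 2 + (4 * nu + 2) * y + 1 - 4 * t.
Proof.
intros Hnu Ht Htb Hy Hphi. apply Rnot_le_lt. intros Hg.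
set (u := 2 * nu + 1). set (w := nu + 1).
set (z := 2 * u * t - w). set (Y := 2 * u * w * y).
set (psi := fun v => (4 * t + 2 * w) * v ^ 2 + 4 * u ^ 2 * w * t * v - 16 * u ^ 2 * w ^ 2 * t ^ 2).
assert (Hu : 0 < u) by (unfold u; lra). assert (Hw : 0 < w) by (unfold w; lra).
assert (HY : 0 < Y) by (unfold Y; pose proof (Rmult_lt_0_compat _ _ Hu Hw); nra).
assert (HYz : Y <= z).
{ assert (0 <= (4 * t + 2 * nu + 2) * - (4 * y ^ 2 + (4 * nu + 2) * y + 1 - 4 * t))
    by (apply Rmult_le_pos; lra).
  unfold Y, z, u, w. lra. }
assert (Hpsi_mono : psi Y <= psi z).
{ assert (0 <= (z - Y) * ((4 * t + 2 * w) * (z + Y) + 4 * u ^ 2 * w * t)).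
  { apply Rmult_le_pos; [lra|]. apply Rplus_le_le_0_compat.
    - apply Rmult_le_pos; lra.
    - pose proof (pow_lt u 2 Hu). repeat apply Rmult_le_pos; lra. }
  unfold psi. nra. }
assert (Hpsi_z : psi z < 0) by (apply bessel_cubic_neg; unfold z, u, w in *; lra).
assert (Hscale : psi Y = (2 * u * w) ^ 2
  * ((4 * t + 2 * nu + 2) * y ^ 2 + (4 * nu + 2) * t * y - 4 * t ^ 2))
  by (unfold psi, Y, u, w; ring).
assert (0 <= psi Y) by (rewrite Hscale; apply Rmult_le_pos; [apply pow2_ge_0 | exact Hphi]).
lra.
Qed.

(** * Three quadratic forms in B and B' *)

Section Invariants.

Variable nu : R.
Hypothesis nu_pos : 0 < nu.

Local Notation B := (bessel_B nu).
Local Notation dB := (bessel_dB nu).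
Local Notation d2B := (bessel_d2B nu).

(* The quadratic forms of the proof (see the opening comment); P = x^2 B^2 (-Q_nu'). *)
Definition bessel_K (t : R) : R := t * dB t ^ 2 + (nu + 1) * B t * dB t - B t ^ 2.
Definition bessel_E (t : R) : R :=
  (4 * t + 2 * nu + 2) * dB t ^ 2 + (4 * nu + 2) * B t * dB t - 4 * B t ^ 2.
Definition bessel_P (t : R) : R :=
  (1 - 4 * t) * B t ^ 2 + (4 * nu + 2) * t * B t * dB t + 4 * t ^ 2 * dB t ^ 2.

(* [auto_derive] expresses derivatives through [Derive]; these identify them. *)
Lemma Derive_B (t : R) : Derive B t = dB t.
Proof. apply is_derive_unique, bessel_B_derive, nu_pos. Qed.

Lemma Derive_dB (t : R) : Derive dB t = d2B t.
Proof. apply is_derive_unique, bessel_dB_derive, nu_pos. Qed.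

Local Ltac bessel_ex_derive :=
  repeat split;
  repeat match goal with
  | |- ex_derive (fun x => bessel_B _ x) _ => eexists; apply bessel_B_derive, nu_pos
  | |- ex_derive (fun x => bessel_dB _ x) _ => eexists; apply bessel_dB_derive, nu_pos
  end.

Definition bessel_dK (t : R) : R :=
  dB t ^ 2 + 2 * t * dB t * d2B t + (nu + 1) * (dB t ^ 2 + B t * d2B t) - 2 * B t * dB t.

Lemma bessel_K_derive (t : R) : is_derive bessel_K t (bessel_dK t).
Proof.
unfold bessel_K, bessel_dK. auto_derive; [bessel_ex_derive|].
rewrite Derive_B, Derive_dB. ring.
Qed.

Lemma bessel_K_euler (t : R) : t * bessel_dK t + (nu + 1) * bessel_K t = t * dB t ^ 2.
Proof.
transitivity (t * dB t ^ 2 + (t * d2B t + (nu + 1) * dB t - B t)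
  * (2 * t * dB t + (nu + 1) * B t)); [unfold bessel_dK, bessel_K; ring|].
rewrite bessel_ode by exact nu_pos. ring.
Qed.

Lemma bessel_K_0 : bessel_K 0 = 0.
Proof. unfold bessel_K. rewrite bessel_B_0, bessel_dB_0 by exact nu_pos. field. lra. Qed.

Lemma bessel_K_nonneg (t : R) : 0 < t -> 0 <= bessel_K t.
Proof.
apply (euler_nonneg bessel_K bessel_dK (nu + 1)); [lra | exact bessel_K_0 | exact bessel_K_derive|].
intros s Hs. rewrite bessel_K_euler. apply Rmult_le_pos; [lra | apply pow2_ge_0].
Qed.

Definition bessel_dE (t : R) : R :=
  4 * dB t ^ 2 + 2 * (4 * t + 2 * nu + 2) * dB t * d2B t
  + (4 * nu + 2) * (dB t ^ 2 + B t * d2B t) - 8 * B t * dB t.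

Lemma bessel_E_derive (t : R) : is_derive bessel_E t (bessel_dE t).
Proof.
unfold bessel_E, bessel_dE. auto_derive; [bessel_ex_derive|].
rewrite Derive_B, Derive_dB. ring.
Qed.

Lemma bessel_E_euler (t : R) :
  t * bessel_dE t + (2 * nu + 2) * bessel_E t = (4 * nu + 6) * bessel_K t.
Proof.
transitivity ((4 * nu + 6) * bessel_K t + (t * d2B t + (nu + 1) * dB t - B t)
  * (8 * t * dB t + (4 * nu + 4) * dB t + (4 * nu + 2) * B t));
  [unfold bessel_dE, bessel_E, bessel_K; ring|].
rewrite bessel_ode by exact nu_pos. ring.
Qed.

Lemma bessel_E_0 : bessel_E 0 = 0.
Proof. unfold bessel_E. rewrite bessel_B_0, bessel_dB_0 by exact nu_pos. field. lra. Qed.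

Lemma bessel_E_nonneg (t : R) : 0 < t -> 0 <= bessel_E t.
Proof.
apply (euler_nonneg bessel_E bessel_dE (2 * nu + 2)); [lra | exact bessel_E_0 | exact bessel_E_derive|].
intros s Hs. rewrite bessel_E_euler. apply Rmult_le_pos; [lra | apply bessel_K_nonneg, Hs].
Qed.

Lemma bessel_P_derive (t : R) : is_derive bessel_P t (2 * (1 - 2 * nu) * bessel_K t).
Proof.
unfold bessel_P. auto_derive; [bessel_ex_derive|].
rewrite Derive_B, Derive_dB.
transitivity (2 * (1 - 2 * nu) * bessel_K t + (t * d2B t + (nu + 1) * dB t - B t)
  * ((4 * nu + 2) * B t + 8 * t * dB t)); [unfold bessel_K; ring|].
rewrite bessel_ode by exact nu_pos. ring.
Qed.

(* For nu <= 1/2, P is nondecreasing from P(0) = 1. *)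
Lemma bessel_P_pos_small_order (t : R) : nu <= 1 / 2 -> 0 < t -> 0 < bessel_P t.
Proof.
intros Hnu Ht.
assert (Hmono : bessel_P 0 <= bessel_P t).
{ apply (nondecreasing_of_derive _ (fun s => 2 * (1 - 2 * nu) * bessel_K s)); [lra| |].
  - intros s _. apply bessel_P_derive.
  - intros s [Hs _]. apply Rmult_le_pos; [lra|].
    destruct (Rle_lt_or_eq_dec 0 s Hs) as [Hpos|<-];
      [apply bessel_K_nonneg, Hpos | rewrite bessel_K_0; lra]. }
unfold bessel_P at 1 in Hmono. rewrite bessel_B_0 in Hmono. lra.
Qed.

(* For t < (nu+2)/2, E >= 0 forces P > 0: with y = t B'/B one has
   E t^2 / B^2 = phi(y) and P / B^2 = g(y) as in [quadratic_constraint]. *)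
Lemma bessel_P_pos_small_arg (t : R) : 0 < t -> t < (nu + 2) / 2 -> 0 < bessel_P t.
Proof.
intros Ht Htb.
pose proof (bessel_B_ge_1 nu nu_pos t Ht) as HB. pose proof (bessel_dB_pos nu nu_pos t Ht).
set (y := t * dB t / B t).
assert (Hy : 0 < y) by (unfold y; apply Rdiv_lt_0_compat; nra).
assert (Hphi : 0 <= (4 * t + 2 * nu + 2) * y ^ 2 + (4 * nu + 2) * t * y - 4 * t ^ 2).
{ replace ((4 * t + 2 * nu + 2) * y ^ 2 + (4 * nu + 2) * t * y - 4 * t ^ 2)
    with (bessel_E t * (t ^ 2 / B t ^ 2)) by (unfold y, bessel_E; field; lra).
  apply Rmult_le_pos; [apply bessel_E_nonneg, Ht|].
  apply Rdiv_le_0_compat; nra. }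
replace (bessel_P t) with (B t ^ 2 * (4 * y ^ 2 + (4 * nu + 2) * y + 1 - 4 * t))
  by (unfold y, bessel_P; field; lra).
apply Rmult_lt_0_compat; [nra | apply (quadratic_constraint nu); assumption].
Qed.

End Invariants.

Lemma Q_series_derive (nu x : R) : 0 < nu -> 0 < x ->
  is_derive (Q_series nu) x
    (- bessel_P nu (x * x / 4) / (x ^ 2 * bessel_B nu (x * x / 4) ^ 2)).
Proof.
intros Hnu Hx. set (t := x * x / 4).
assert (Ht : 0 < t) by (unfold t; nra).
pose proof (bessel_B_ge_1 nu Hnu t Ht).
assert (Hd2B : bessel_d2B nu t = (bessel_B nu t - (nu + 1) * bessel_dB nu t) / t).
{ apply (Rmult_eq_reg_l t); [|lra]. rewrite <- (bessel_ode nu Hnu t). field. lra. }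
unfold Q_series. auto_derive.
- change (x * x * / 4) with t. repeat split; try lra;
    [eexists; apply bessel_dB_derive, Hnu | eexists; apply bessel_B_derive, Hnu].
- change (x * x * / 4) with t. rewrite (Derive_B nu Hnu), (Derive_dB nu Hnu), Hd2B.
  unfold bessel_P, t in *. field. split; lra.
Qed.

Lemma Q_series_decreasing (nu : R) (b : Rbar) : 0 < nu ->
  (forall x, 0 < x -> Rbar_lt x b -> 0 < bessel_P nu (x * x / 4)) ->
  forall x y, 0 < x -> x < y -> Rbar_lt y b -> Q_series nu y < Q_series nu x.
Proof.
intros Hnu HP x y Hx Hxy Hy.
cut (- Q_series nu x < - Q_series nu y); [lra|].
apply (incr_function (fun z => - Q_series nu z) (Finite 0) b
  (fun z => bessel_P nu (z * z / 4) / (z ^ 2 * bessel_B nu (z * z / 4) ^ 2))); auto.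
- intros z Hz _. simpl in Hz.
  replace (bessel_P nu (z * z / 4) / (z ^ 2 * bessel_B nu (z * z / 4) ^ 2))
    with (- (- bessel_P nu (z * z / 4) / (z ^ 2 * bessel_B nu (z * z / 4) ^ 2)))
    by (pose proof (bessel_B_ge_1 nu Hnu (z * z / 4) ltac:(nra)); field; split; nra).
  exact (is_derive_opp (Q_series nu) z _ (Q_series_derive nu z Hnu Hz)).
- intros z Hz Hzb. simpl in Hz.
  pose proof (bessel_B_ge_1 nu Hnu (z * z / 4) ltac:(nra)).
  apply Rdiv_lt_0_compat; [apply HP; assumption | apply Rmult_lt_0_compat; nra].
Qed.

Theorem mainTheorem11 :
  (forall nu : R, 0 < nu ->
     forall x y : R, 0 < x -> x < y -> y < sqrt (2 * nu + 4) ->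
       Qnu nu y < Qnu nu x) /\
  (forall nu : R, 0 < nu -> nu <= 1 / 2 ->
     forall x y : R, 0 < x -> x < y -> Qnu nu y < Qnu nu x).
Proof.
split.
- intros nu Hnu x y Hx Hxy Hy. rewrite !Qnu_series by lra.
  apply (Q_series_decreasing nu (Finite (sqrt (2 * nu + 4)))); auto.
  intros z Hz Hzb. simpl in Hzb.
  assert (z * z < 2 * nu + 4).
  { pose proof (sqrt_sqrt (2 * nu + 4) ltac:(lra)). pose proof (sqrt_pos (2 * nu + 4)). nra. }
  apply bessel_P_pos_small_arg; [exact Hnu | nra | lra].
- intros nu Hnu Hnu2 x y Hx Hxy. rewrite !Qnu_series by lra.
  apply (Q_series_decreasing nu p_infty); [exact Hnu | | exact Hx | exact Hxy | exact I].
  intros z Hz _. apply bessel_P_pos_small_order; [exact Hnu | exact Hnu2 | nra].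
Qed.
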